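(* Let $\Omega\subseteq\mathcal{A}_n$ be a closed set which is uniformly transversally star-shaped with respect to $S\in\mathcal{A}_n$. Then for every $R\in\Omega$, the tensor $R+\alpha(S-R)$ lies in the interior of $\Omega$ for all $\alpha\in(0,1)$.
   Context: $\mathcal{A}_n$ is the (finite-dimensional Euclidean) space of algebraic curvature tensors on $\mathbb{R}^n$, i.e. symmetric bilinear forms on $\Lambda^2\mathbb{R}^n$ satisfying the first Bianchi identity, with scalar product $\langle R,S\rangle=\mathrm{tr}(R\circ S)$. A closed $\Omega\subseteq\mathcal{A}_n$ is uniformly transversally star-shaped with respect to $S$ if for every compact $K\subseteq\mathcal{A}_n$ there is $r>0$ such that for every $R\in K\cap\partial\Omega$ there is $\varepsilon_0>0$ with $R+\varepsilon B_r(S-R)\subseteq\Omega$ for all $\varepsilon\in[0,\varepsilon_0)$, where $B_r(v)$ is the open ball of radius $r$ around $v$. *)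

From HB Require Import structures.
From mathcomp Require Import all_boot all_order all_algebra.
From mathcomp Require Import reals.
Set Implicit Arguments. Unset Strict Implicit. Unset Printing Implicit Defensive.
Import Order.TTheory GRing.Theory Num.Theory.
Local Open Scope ring_scope.

(* 4-tensors on R^n, written in coordinates w.r.t. the standard basis:
   T i j k l = T(e_i, e_j, e_k, e_l). *)
Definition tensor4 (R : realType) (n : nat) := 'I_n -> 'I_n -> 'I_n -> 'I_n -> R.

Section Defs.
Variables (R : realType) (n : nat).
Implicit Types (T U : tensor4 R n) (P : tensor4 R n -> Prop).

Definition taddT T U : tensor4 R n := fun i j k l => T i j k l + U i j k l.
Definition tsubT T U : tensor4 R n := fun i j k l => T i j k l - U i j k l.
Definition tscaleT (a : R) T : tensor4 R n := fun i j k l => a * T i j k l.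

(* Algebraic curvature tensors: symmetric bilinear forms on Lambda^2 R^n
   (R(x^y, z^w) with skew-symmetry in each pair and pair symmetry),
   satisfying the first Bianchi identity. *)
Definition is_act T : Prop :=
  [/\ forall i j k l, T i j k l = - T j i k l,
      forall i j k l, T i j k l = - T i j l k,
      forall i j k l, T i j k l = T k l i j &
      forall i j k l, T i j k l + T j k i l + T k i j l = 0].

(* <T,U> = tr(T o U), T,U viewed as self-adjoint operators on Lambda^2 R^n
   with the orthonormal basis (e_i ^ e_j)_{i<j}. *)
Definition actdot T U : R :=
  \sum_(i < n) \sum_(j < n) \sum_(k < n) \sum_(l < n)
    (if (i < j)%N && (k < l)%N then T i j k l * U i j k l else 0).

Definition actnorm T : R := Num.sqrt (actdot T T).

Definition actball V (r : R) : tensor4 R n -> Prop :=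
  fun W => is_act W /\ actnorm (tsubT W V) < r.

Definition act_open P : Prop :=
  forall T, is_act T -> P T -> exists2 r : R, 0 < r & forall W, actball T r W -> P W.

Definition act_closed P : Prop :=
  forall T, is_act T ->
    (forall r : R, 0 < r -> exists W, actball T r W /\ P W) -> P T.

Definition act_interior P : tensor4 R n -> Prop :=
  fun T => is_act T /\ exists2 r : R, 0 < r & forall W, actball T r W -> P W.

Definition act_boundary P : tensor4 R n -> Prop :=
  fun T => is_act T /\
    forall r : R, 0 < r ->
      (exists W, actball T r W /\ P W) /\ (exists W, actball T r W /\ ~ P W).

Definition act_compact (K : tensor4 R n -> Prop) : Prop :=
  (forall T, K T -> is_act T) /\
  forall (I : Type) (Uf : I -> tensor4 R n -> Prop),
    (forall i, act_open (Uf i)) ->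
    (forall T, K T -> exists i, Uf i T) ->
    exists (m : nat) (f : 'I_m -> I), forall T, K T -> exists j : 'I_m, Uf (f j) T.

Definition act_cone_in P Rt S (eps r : R) : Prop :=
  forall V, actball (tsubT S Rt) r V -> P (taddT Rt (tscaleT eps V)).

Definition unif_transv_star_shaped P S : Prop :=
  forall K : tensor4 R n -> Prop, act_compact K ->
    exists2 r : R, 0 < r &
      forall Rt, K Rt -> act_boundary P Rt ->
        exists2 eps0 : R, 0 < eps0 &
          forall eps : R, 0 <= eps -> eps < eps0 -> act_cone_in P Rt S eps r.

End Defs.

From mathcomp Require Import all_boot all_order all_algebra.
From mathcomp Require Import reals boolp classical_sets ring lra.
Set Implicit Arguments. Unset Strict Implicit. Unset Printing Implicit Defensive.
Import Order.TTheory GRing.Theory Num.Theory.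
Local Open Scope ring_scope.

(* At a boundary point Q of Omega the transversal cone Q + e B_r(S - Q) lies
   in Omega, and for e > 0 it contains the ball of radius e r around
   Q + e (S - Q); at an interior point such balls exist trivially (only
   singleton compact sets K are needed).  So every Q in Omega has
   Q + e (S - Q) in Omega for all small e >= 0, and closedness of Omega turns
   this, by continuous induction along [0, 1], into the whole segment [P, S]
   lying in Omega for every P in Omega.  Hence the homothety of centre S and
   ratio 1 - t maps Omega into itself, so it maps a ball around an interior
   point C onto a ball around C + t (S - C) inside Omega.  Apply this to
   C = R + e (S - R) with 0 <= e < alpha interior. *)

Lemma exists_pos_lt2 (R : realFieldType) (a b : R) :
  0 < a -> 0 < b -> exists2 h : R, 0 < h & h < a /\ h < b.
Proof. by move=> a0 b0; case: (leP a b) => ?; [exists (a / 2) | exists (b / 2)]; lra. Qed.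

Lemma continuous_induction (R : realType) (p : R -> Prop) :
  p 0 ->
  (forall t : R, 0 < t <= 1 -> (forall s, 0 <= s < t -> p s) -> p t) ->
  (forall t : R, 0 <= t < 1 -> p t ->
     exists2 d : R, 0 < d & forall s, t < s < t + d -> p s) ->
  forall t : R, 0 <= t <= 1 -> p t.
Proof.
move=> p0 p_closed p_open.
pose E : set R := fun t => 0 <= t <= 1 /\ forall s, 0 <= s <= t -> p s.
have E0 : E 0.
  split=> [|s /andP[s0 s0']]; first by rewrite lexx ler01.
  by have -> : s = 0 by lra.
have supE : has_sup E by split; [exists 0 | exists 1 => x [/andP[_]]].
set m := sup E.
have m0 : 0 <= m by apply: sup_upper_bound.
have m1 : m <= 1 by apply: ge_sup; [exists 0 | move=> x [/andP[_]]].
have below_m s : 0 <= s < m -> p s.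
  case/andP=> s0 sm; have [|e [_ pe] me] := @sup_adherent _ E (m - s) _ supE.
    by rewrite subr_gt0.
  by rewrite -/m in me; apply: pe; rewrite s0 /=; lra.
have upto_m s : 0 <= s <= m -> p s.
  case/andP=> s0; rewrite le_eqVlt => /predU1P[-> | sm]; last by apply: below_m; rewrite s0.
  have [-> // | m_gt0] := eqVneq m 0; apply: p_closed => //.
  by rewrite lt_neqAle eq_sym m_gt0 m0 m1.
have m_eq1 : m = 1.
  apply/eqP; rewrite eq_le m1 leNgt; apply/negP => m_lt1.
  have pm : p m by apply: upto_m; rewrite m0 lexx.
  have [d d0 pd] : exists2 d : R, 0 < d & forall s, m < s < m + d -> p s.
    by apply: p_open pm; rewrite m0.
  have [h h0 [hd hm]] : exists2 h : R, 0 < h & h < d /\ h < 1 - m.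
    by apply: exists_pos_lt2; rewrite ?subr_gt0.
  have : E (m + h).
    split=> [|s /andP[s0 smh]]; first by apply/andP; lra.
    have [sm | ms] := leP s m; first by apply: upto_m; rewrite s0.
    by apply: pd; apply/andP; lra.
  by move=> /(sup_upper_bound supE); rewrite -/m; lra.
by move=> t t01; apply: upto_m; rewrite m_eq1.
Qed.

Ltac tensor_ext := do 4 (apply: funext => ?); unfold taddT, tsubT, tscaleT.

Section Tensors.
Variables (R : realType) (n : nat).
Implicit Types (T U : tensor4 R n) (P : tensor4 R n -> Prop).

Lemma is_actD T U : is_act T -> is_act U -> is_act (taddT T U).
Proof.
case=> T1 T2 T3 T4 [U1 U2 U3 U4]; split=> i j k l; rewrite /taddT.
- by rewrite T1 U1 opprD.
- by rewrite T2 U2 opprD.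
- by rewrite T3 U3.
- by have := T4 i j k l; have := U4 i j k l; lra.
Qed.

Lemma is_actZ a T : is_act T -> is_act (tscaleT a T).
Proof.
case=> T1 T2 T3 T4; split=> i j k l; rewrite /tscaleT.
- by rewrite T1 mulrN.
- by rewrite T2 mulrN.
- by rewrite T3.
- by rewrite -!mulrDr T4 mulr0.
Qed.

Lemma is_actB T U : is_act T -> is_act U -> is_act (tsubT T U).
Proof.
move=> actT actU; have -> : tsubT T U = taddT T (tscaleT (-1) U) by tensor_ext; ring.
by apply: is_actD => //; apply: is_actZ.
Qed.

Lemma actdotZ a T : actdot (tscaleT a T) (tscaleT a T) = a ^+ 2 * actdot T T.
Proof.
rewrite /actdot mulr_sumr; apply: eq_bigr => i _.
rewrite mulr_sumr; apply: eq_bigr => j _.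
rewrite mulr_sumr; apply: eq_bigr => k _.
rewrite mulr_sumr; apply: eq_bigr => l _.
by case: ifP => _; [rewrite /tscaleT; ring | rewrite mulr0].
Qed.

Lemma actnormZ a T : actnorm (tscaleT a T) = `|a| * actnorm T.
Proof. by rewrite /actnorm actdotZ sqrtrM ?sqr_ge0 // sqrtr_sqr. Qed.

Lemma actnorm_ge0 T : 0 <= actnorm T.
Proof. exact: sqrtr_ge0. Qed.

Lemma actnormV_lt c r T :
  0 < c -> actnorm T < c * r -> actnorm (tscaleT c^-1 T) < r.
Proof.
move=> c0 Tlt; rewrite actnormZ gtr0_norm ?invr_gt0 //.
by rewrite -(ltr_pM2l c0) mulrA mulfV ?mul1r ?gt_eqF.
Qed.

Lemma actball_center T r : is_act T -> 0 < r -> actball T r T.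
Proof.
move=> actT r0; split=> //.
have -> : tsubT T T = tscaleT 0 T by tensor_ext; ring.
by rewrite actnormZ normr0 mul0r.
Qed.

Lemma act_compact1 T : is_act T -> act_compact (fun U => U = T).
Proof.
move=> actT; split=> [_ -> // | I Uf _ cover].
have [i Ui] := cover T erefl.
by exists 1%N, (fun _ => i) => _ ->; exists ord0.
Qed.

Lemma act_interior_or_boundary P T :
  is_act T -> P T -> act_interior P T \/ act_boundary P T.
Proof.
move=> actT PT; have [intT | not_int] := pselect (act_interior P T); [by left | right].
split=> // r r0; split; first by exists T; split=> //; exact: actball_center.
apply: contrapT => all_in; apply: not_int; split=> //; exists r => // W ballW.
by apply: contrapT => notPW; apply: all_in; exists W.
Qed.

Variable S : tensor4 R n.

Definition seg T (t : R) : tensor4 R n := taddT T (tscaleT t (tsubT S T)).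

Lemma is_act_seg T t : is_act S -> is_act T -> is_act (seg T t).
Proof. by move=> actS actT; apply: is_actD => //; apply: is_actZ; apply: is_actB. Qed.

Lemma seg0 T : seg T 0 = T.
Proof. by rewrite /seg; tensor_ext; ring. Qed.

Lemma actnorm_segB T s t :
  actnorm (tsubT (seg T s) (seg T t)) = `|s - t| * actnorm (tsubT S T).
Proof. by rewrite -actnormZ; congr actnorm; rewrite /seg; tensor_ext; ring. Qed.

Lemma tsubT_addl T U : tsubT (taddT T U) T = U.
Proof. by tensor_ext; ring. Qed.

Lemma seg_seg T s t : seg (seg T s) t = seg T (s + t * (1 - s)).
Proof. by rewrite /seg; tensor_ext; ring. Qed.

Lemma seg_shift T W t :
  t != 1 -> seg (taddT T (tscaleT (1 - t)^-1 (tsubT W (seg T t)))) t = W.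
Proof. by move=> t1; rewrite /seg; tensor_ext; field; rewrite subr_eq0 eq_sym. Qed.

Lemma seg_cone T W e :
  e != 0 -> taddT T (tscaleT e (taddT (tsubT S T) (tscaleT e^-1 (tsubT W (seg T e))))) = W.
Proof. by move=> e0; rewrite /seg; tensor_ext; field. Qed.

End Tensors.

Section StarShaped.
Variables (R : realType) (n : nat) (Omega : tensor4 R n -> Prop) (S : tensor4 R n).
Hypothesis Omega_act : forall T, Omega T -> is_act T.
Hypothesis Omega_closed : act_closed Omega.
Hypothesis S_act : is_act S.
Hypothesis Omega_star : unif_transv_star_shaped Omega S.

Lemma act_boundary_cone Q : act_boundary Omega Q ->
  exists2 r : R, 0 < r & exists2 e0 : R, 0 < e0 &
    forall e, 0 <= e -> e < e0 -> act_cone_in Omega Q S e r.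
Proof.
move=> bdQ; have [r r0 cones] := Omega_star (act_compact1 bdQ.1).
by exists r => //; apply: cones.
Qed.

Lemma seg_in_near0 Q : Omega Q ->
  exists2 d : R, 0 < d & forall e, 0 <= e -> e < d -> Omega (seg S Q e).
Proof.
move=> OQ; have actQ := Omega_act OQ.
have [[_ [r r0 ballQ]] | bdQ] := act_interior_or_boundary actQ OQ.
  have N0 := actnorm_ge0 (tsubT S Q).
  exists (r / (actnorm (tsubT S Q) + 1)) => [|e e0 e_lt]; first by rewrite divr_gt0 //; lra.
  apply: ballQ; split; first exact: is_act_seg.
  rewrite -{2}(seg0 S Q) actnorm_segB subr0 ger0_norm //.
  by rewrite ltr_pdivlMr in e_lt; nra.
have [r r0 [e0 e0_gt0 cone]] := act_boundary_cone bdQ.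
exists e0 => // e e_ge0 e_lt; apply: cone => //.
by apply: actball_center => //; apply: is_actB.
Qed.

Lemma seg_in P : Omega P -> forall t : R, 0 <= t <= 1 -> Omega (seg S P t).
Proof.
move=> OP; have actP := Omega_act OP; have N0 := actnorm_ge0 (tsubT S P).
apply: continuous_induction; first by rewrite seg0.
  move=> t /andP[t0 _] before; apply: Omega_closed => [|r r0]; first exact: is_act_seg.
  have [h h0 [ht hr]] :
      exists2 h : R, 0 < h & h < t /\ h < r / (actnorm (tsubT S P) + 1).
    by apply: exists_pos_lt2; rewrite ?divr_gt0 //; lra.
  exists (seg S P (t - h)); split; last by apply: before; apply/andP; lra.
  split; first exact: is_act_seg.
  rewrite actnorm_segB (_ : t - h - t = - h) ?normrN ?gtr0_norm //; last by ring.
  by rewrite ltr_pdivlMr in hr; nra.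
move=> t /andP[t0 t1] Ot; have [d d0 small] := seg_in_near0 Ot.
exists (d * (1 - t)) => [|s /andP[ts sd]]; first by rewrite mulr_gt0 ?subr_gt0.
have t1' : 1 - t != 0 by rewrite subr_eq0 eq_sym lt_eqF.
have -> : s = t + (s - t) / (1 - t) * (1 - t) by rewrite mulfVK // addrC subrK.
rewrite -seg_seg; apply: small; first by rewrite divr_ge0 //; lra.
by rewrite ltr_pdivrMr; lra.
Qed.

Lemma act_interior_seg C (t : R) :
  act_interior Omega C -> 0 <= t < 1 -> act_interior Omega (seg S C t).
Proof.
move=> [actC [r r0 ballC]] /andP[t0 t1]; have t1' : 0 < 1 - t by rewrite subr_gt0.
split; first exact: is_act_seg.
exists ((1 - t) * r) => [|W [actW Wlt]]; first exact: mulr_gt0.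
rewrite -(seg_shift S C W (negbT (lt_eqF t1))); apply: seg_in; last by rewrite t0 ltW.
apply: ballC; split.
  by apply: is_actD => //; apply: is_actZ; apply: is_actB => //; apply: is_act_seg.
by rewrite tsubT_addl; apply: actnormV_lt.
Qed.

Lemma exists_seg_interior_below Q alpha : Omega Q -> 0 < alpha ->
  exists2 e : R, 0 <= e < alpha & act_interior Omega (seg S Q e).
Proof.
move=> OQ alpha0; have actQ := Omega_act OQ.
have [intQ | bdQ] := act_interior_or_boundary actQ OQ.
  by exists 0; rewrite ?lexx ?seg0.
have [r r0 [e0 e0_gt0 cone]] := act_boundary_cone bdQ.
have [e e_gt0 [e_alpha e_e0]] := exists_pos_lt2 alpha0 e0_gt0.
exists e; first by rewrite ltW.
split; first exact: is_act_seg.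
exists (e * r) => [|W [actW Wlt]]; first exact: mulr_gt0.
rewrite -(seg_cone S Q W (negbT (gt_eqF e_gt0))); apply: cone; rewrite ?ltW //.
split; last by rewrite tsubT_addl; apply: actnormV_lt.
by apply: is_actD; [apply: is_actB | apply: is_actZ; apply: is_actB => //; apply: is_act_seg].
Qed.

End StarShaped.

Theorem lemma4p6 (R : realType) (n : nat) (Omega : tensor4 R n -> Prop)
    (S : tensor4 R n) :
  (forall T, Omega T -> is_act T) ->
  act_closed Omega ->
  is_act S ->
  unif_transv_star_shaped Omega S ->
  forall Rt : tensor4 R n, Omega Rt ->
  forall alpha : R, 0 < alpha -> alpha < 1 ->
    act_interior Omega (taddT Rt (tscaleT alpha (tsubT S Rt))).
Proof.
move=> Omega_act Omega_closed S_act Omega_star Rt ORt alpha alpha0 alpha1.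
have [e /andP[e0 e_alpha] int_e] := exists_seg_interior_below Omega_act S_act Omega_star ORt alpha0.
have e1 : 1 - e != 0 by rewrite subr_eq0 eq_sym lt_eqF //; lra.
pose t := (alpha - e) / (1 - e).
have -> : alpha = e + t * (1 - e) by rewrite /t mulfVK // addrC subrK.
rewrite -[taddT _ _]/(seg S Rt _) -seg_seg.
apply: act_interior_seg => //; apply/andP; split; first by rewrite divr_ge0 //; lra.
by rewrite ltr_pdivrMr; lra.
Qed.
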